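(* Fix integers $i\ge0$ and $0\le a<p$, and use the notation of the context. (a) Define integers $u_1,\dots,u_s$ inductively by $u_1:=\Big\lceil\frac{iq-a}{p+qm_f}\Big\rceil$ and $u_j:=\Big\lceil\frac{u_{j-1}n_{j+1,s}-a'_j}{n_{j,s}}\Big\rceil$ for $1<j\le s$. Then the cycle $z(i):=ib_0+\sum_{j=1}^su_jb_j$ is $\ge0$ and satisfies $(z(i)+l'_{[-ag_s]},b_j)\le0$ for all $j=1,\dots,s$. (b) If a cycle $\bar z(i)=ib_0+\sum_{j=1}^s\bar u_jb_j\ge0$ satisfies $(\bar z(i)+l'_{[-ag_s]},b_j)\le0$ for all $j=1,\dots,s$, then $\bar u_1\ge\Big\lceil\frac{iq-a}{p+qm_f}\Big\rceil$ and $\bar u_j\ge\Big\lceil\frac{\bar u_{j-1}n_{j+1,s}-a'_j}{n_{j,s}}\Big\rceil$ for $1<j\le s$.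
   Context: $f:(\mathbb C^2,0)\to(\mathbb C,0)$ irreducible plane curve germ, singular at $0$; $G(f)$ its minimal embedded good resolution graph with unique $(-1)$-vertex $v_0$ carrying the strict transform; $\bar G$ this graph without the arrow; $m_f$ the vanishing order of $f$ along $E_{v_0}$. $p,q$ coprime positive integers, $p/q=[k_1,\dots,k_s]=k_1-1/(k_2-1/(\cdots-1/k_s))$ with $k_1\ge1$, $k_j\ge2$ ($j\ge2$). $G(M)$ is the graph obtained from $\bar G$ by attaching a chain $v_1,\dots,v_s$ ($v_1$ adjacent to $v_0$) with Euler numbers $-k_1-m_f,-k_2,\dots,-k_s$ (plumbing graph of $S^3_{-p/q}(K_f)$). $L$ is the lattice with basis $b_j$ indexed by the vertices ($b_0\leftrightarrow v_0$, $b_j\leftrightarrow v_j$ for $1\le j\le s$), with the negative definite intersection form $(\,,\,)$ of $G(M)$ (Euler numbers on the diagonal, $1$ for adjacent vertices, $0$ otherwise), extended to $L_{\mathbb Q}=L\otimes\mathbb Q$; $L'=\{x\in L_\mathbb Q:(x,L)\subset\mathbb Z\}$, $g_j\in L'$ the dual basis ($(g_i,b_j)=\delta_{ij}$). $x\ge y$ means all coefficients of $x-y$ are $\ge0$. $S_\mathbb Q=\{x\in L_\mathbb Q:(x,b_j)\le0\ \forall j\}$; $l'_{[-ag_s]}$ is the unique minimal element of $(-ag_s+L)\cap S_\mathbb Q$. For $1\le i\le j\le s$ write $[k_i,\dots,k_j]=n_{ij}/d_{ij}$ with $n_{ij}>0$, $\gcd(n_{ij},d_{ij})=1$; set $n_{i,i-1}:=1$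 and $n_{ij}:=0$ for $j<i-1$. From $a$ define $a_i:=\Big\lfloor\frac{a-\sum_{t=1}^{i-1}n_{t+1,s}a_t}{n_{i+1,s}}\Big\rfloor$ for $1\le i\le s$, and $a'_j:=n_{j+1,s}a_j+n_{j+2,s}a_{j+1}+\cdots+n_{s+1,s}a_s$ for $1\le j\le s$. *)

From HB Require Import structures.
From mathcomp Require Import all_boot all_order all_algebra.
Unset Printing Implicit Defensive.
Import Order.TTheory GRing.Theory Num.Theory.
Local Open Scope ring_scope.

(* Resolution graphs of irreducible plane curve germs, built by the    *)
(* sequence of point blow-ups along the branch.  Vertices are the nats *)
(* 0 .. rg_n-1; rg_e = Euler numbers (self-intersections); rg_adj =    *)
(* adjacency; rg_last = the last created exceptional curve, on which   *)
(* the strict transform of the branch lies.                            *)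
Record rgraph := RG {
  rg_n : nat; rg_e : nat -> int; rg_adj : nat -> nat -> bool; rg_last : nat }.

(* blow-up of the origin *)
Definition rg_init : rgraph :=
  RG 1 (fun v => if v == 0%N then -1 else 0) (fun _ _ => false) 0.

(* None   : blow up a free point of E_last (on no other E_v);
   Some d : blow up the satellite point E_last \cap E_d. *)
Definition step := option nat.

Definition blowup (G : rgraph) (st : step) : rgraph :=
  let w := rg_n G in let c := rg_last G in
  match st with
  | None => RG w.+1
      (fun v => if v == w then -1 else if v == c then rg_e G v - 1 else rg_e G v)
      (fun u v => [|| rg_adj G u v, (u == c) && (v == w) | (u == w) && (v == c)])
      w
  | Some d => RG w.+1
      (fun v => if v == w then -1
                else if (v == c) || (v == d) then rg_e G v - 1 else rg_e G v)
      (fun u v => [|| rg_adj G u v && ~~ (((u == c) && (v == d)) || ((u == d) && (v == c))),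
                      ((u == c) || (u == d)) && (v == w)
                    | (u == w) && ((v == c) || (v == d))])
      w
  end.

Fixpoint valid_from (G : rgraph) (sts : seq step) : bool :=
  match sts with
  | [::] => true
  | st :: t =>
      (if st is Some d then (d < rg_n G)%N && rg_adj G (rg_last G) d else true)
      && valid_from (blowup G st) t
  end.

Definition build (sts : seq step) : rgraph := foldl blowup rg_init sts.

(* The minimal embedded good resolution of a singular branch: the
   sequence of infinitely near points is stopped right after the last
   satellite point; the strict transform then meets E_{v_0} (= rg_last)
   transversally at a free point. *)
Definition min_res_steps (sts : seq step) : bool :=
  valid_from rg_init sts && (if last None sts is Some _ then true else false).

Definition gbar_form (G : rgraph) (u v : nat) : int :=
  if u == v then rg_e G u else if rg_adj G u v then 1 else 0.

(* m_f : multiplicity of div(f) along E_{v_0}; div(f) = sum m_v E_v + strict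
   transform, and (div f, E_v) = 0 for every exceptional E_v. *)
Definition is_mf (G : rgraph) (mf : int) : Prop :=
  exists mv : nat -> int, mv (rg_last G) = mf /\
    forall v, (v < rg_n G)%N ->
      \sum_(u < rg_n G) mv u * gbar_form G u v + (v == rg_last G)%:R = 0.

Fixpoint cf (l : seq int) : rat :=
  match l with
  | [::] => 0
  | x :: t => if t is [::] then x%:~R else x%:~R - (cf t)^-1
  end.

Definition kseq (k : nat -> int) (i j : nat) : seq int :=
  [seq k t | t <- iota i (j.+1 - i)].

Definition nn (k : nat -> int) (i j : nat) : int :=
  if (i <= j)%N then numq (cf (kseq k i j))
  else if j.+1 == i then 1 else 0.

Fixpoint alist (k : nat -> int) (s : nat) (a : int) (i : nat) : seq int :=
  match i with
  | 0 => [::]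
  | i'.+1 => let l := alist k s a i' in
      rcons l (Num.floor
        (((a - \sum_(t < i') nn k t.+2 s * nth 0 l t)%:~R
           / (nn k i'.+2 s)%:~R) : rat))
  end.

Definition aa (k : nat -> int) (s : nat) (a : int) (i : nat) : int :=
  nth 0 (alist k s a i) i.-1.

Definition aprime (k : nat -> int) (s : nat) (a : int) (j : nat) : int :=
  \sum_(j <= t < s.+1) nn k t.+1 s * aa k s a t.

Definition u1bound (p q : nat) (mf a : int) (i : nat) : int :=
  Num.ceil ((((i * q)%N%:Z - a)%:~R / (p%:Z + q%:Z * mf)%:~R) : rat).

Definition ubound (k : nat -> int) (s : nat) (a : int) (j : nat) (x : int) : int :=
  Num.ceil (((x * nn k j.+1 s - aprime k s a j)%:~R / (nn k j s)%:~R) : rat).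

Fixpoint useq (k : nat -> int) (s p q : nat) (mf a : int) (i j : nat) : int :=
  match j with
  | 0 => 0
  | j'.+1 => if j' is 0 then u1bound p q mf a i
             else ubound k s a j (useq k s p q mf a i j')
  end.

(* The lattice of G(M): vertices = vertices of \bar G (inl) and the    *)
(* chain v_1..v_s (inr t  <->  v_{t+1}).                              *)
Definition Vtx (G : rgraph) (s : nat) : finType := ('I_(rg_n G) + 'I_s)%type.

Definition GMform (G : rgraph) (s : nat) (k : nat -> int) (mf : int)
  (u v : Vtx G s) : int :=
  match u, v with
  | inl x, inl y => gbar_form G x y
  | inl x, inr j | inr j, inl x =>
      if (val x == rg_last G) && (val j == 0%N) then 1 else 0
  | inr j1, inr j2 =>
      if j1 == j2 then (if val j1 == 0%N then - k 1%N - mf else - k (val j1).+1)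
      else if (val j1 == (val j2).+1) || (val j2 == (val j1).+1) then 1 else 0
  end.

Definition bform (G : rgraph) (s : nat) (k : nat -> int) (mf : int)
  (x y : Vtx G s -> rat) : rat :=
  \sum_(u : Vtx G s) \sum_(w : Vtx G s) x u * y w * (GMform G s k mf u w)%:~R.

Definition bvec (G : rgraph) (s : nat) (v : Vtx G s) : Vtx G s -> rat :=
  fun u => (u == v)%:R.

Definition b0 (G : rgraph) (s : nat) : Vtx G s -> rat :=
  fun u => if u is inl x then (val x == rg_last G)%:R else 0.
Definition bchain (G : rgraph) (s : nat) (j : nat) : Vtx G s -> rat :=
  fun u => if u is inr t then ((val t).+1 == j)%:R else 0.

Definition is_gs (G : rgraph) (s : nat) (k : nat -> int) (mf : int)
  (gs : Vtx G s -> rat) : Prop :=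
  forall v : Vtx G s, bform G s k mf gs (bvec G s v) = bchain G s (s) v.

Definition in_coset (G : rgraph) (s : nat) (a : int) (gs x : Vtx G s -> rat) : Prop :=
  exists z : Vtx G s -> int, forall u, x u = - a%:~R * gs u + (z u)%:~R.

Definition in_SQ (G : rgraph) (s : nat) (k : nat -> int) (mf : int)
  (x : Vtx G s -> rat) : Prop :=
  forall v : Vtx G s, bform G s k mf x (bvec G s v) <= 0.

Definition is_lprime (G : rgraph) (s : nat) (k : nat -> int) (mf a : int)
  (gs l : Vtx G s -> rat) : Prop :=
  [/\ in_coset G s a gs l, in_SQ G s k mf l &
      forall y, in_coset G s a gs y -> in_SQ G s k mf y -> forall u, l u <= y u].

Definition zcyc (G : rgraph) (s : nat) (i : nat) (u : nat -> int) : Vtx G s -> rat :=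
  fun v => match v with
           | inl x => if val x == rg_last G then i%:R else 0
           | inr t => (u (val t).+1)%:~R
           end.

From Pilot Require Import Defs.
From HB Require Import structures.
From mathcomp Require Import all_boot all_order all_algebra.
From mathcomp Require Import zify ring lra.
Set Implicit Arguments.
Unset Strict Implicit.
Unset Printing Implicit Defensive.
Import Order.TTheory GRing.Theory Num.Theory.
Local Open Scope ring_scope.

(* Write l' for l'_{[-a g_s]}.  For an integer cycle x with chain coordinates
   w_0 = x(v_0) - m_f x(v_1), w_j = x(v_j) (1 <= j <= s), w_{s+1} = 0, the pairing
   (x, b_j) is w_{j-1} - k_j w_j + w_{j+1}; weighting by n_{j+1,s} and summing over
   j >= j0 telescopes, through n_{j,s} = k_j n_{j+1,s} - n_{j+2,s}, to
   n_{j0+1,s} w_{j0-1} - n_{j0,s} w_{j0}.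
   First, (l', b_j) = -a_j: the element c = -a g_s + W, with W on the chain solving
   these equations with right-hand sides -a_j, lies in the coset and in S_Q, so l' <= c;
   the telescoped inequalities together with 0 <= a'_j < n_{j,s}, and minimality of l'
   against shifts along the divisor of f, force the chain pairings of l' - c to vanish.
   Then (z(i) + l', b_j) <= 0 for all j reads n_{j+1,s} u_{j-1} - a'_j <= n_{j,s} u_j
   (q i - a <= (p + q m_f) u_1 for j = 1), which is (b); conversely the ceilings of (a)
   keep every partial sum within n_{j,s} of 0, and this forces each inequality. *)

Section IntQuotient.

Variable R : archiRealFieldType.

Lemma ceil_divz_le (A B u : int) : 0 < B ->
  (Num.ceil (A%:~R / B%:~R : R) <= u) = (A <= u * B).
Proof. by move=> B_gt0; rewrite ceil_le_int ler_pdivrMr ?ltr0z // -intrM ler_int. Qed.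

Lemma ceil_divz_ge (A B : int) : 0 < B -> A <= Num.ceil (A%:~R / B%:~R : R) * B.
Proof. by move=> B_gt0; rewrite -ceil_divz_le. Qed.

Lemma ceil_divz_lt (A B : int) : 0 < B -> Num.ceil (A%:~R / B%:~R : R) * B < A + B.
Proof.
move=> B_gt0; rewrite -(ltr_int R) intrM intrD -ltr_pdivlMr ?ltr0z //.
rewrite mulrDl divff ?intr_eq0 ?gt_eqF // -ltrBlDr.
by case/andP: (ceil_itv (A%:~R / B%:~R : R)); rewrite intrB.
Qed.

Lemma floor_divz_le (A B : int) : 0 < B -> Num.floor (A%:~R / B%:~R : R) * B <= A.
Proof.
move=> B_gt0; rewrite -(ler_int R) intrM -ler_pdivlMr ?ltr0z //.
by case/andP: (floor_itv (A%:~R / B%:~R : R)).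
Qed.

Lemma floor_divz_gt (A B : int) : 0 < B -> A < Num.floor (A%:~R / B%:~R : R) * B + B.
Proof.
move=> B_gt0; rewrite -[X in _ < _ + X]mul1r -mulrDl -(ltr_int R) intrM.
rewrite -ltr_pdivrMr ?ltr0z //.
by case/andP: (floor_itv (A%:~R / B%:~R : R)).
Qed.

End IntQuotient.

Lemma num_den_divz (n d : int) : 0 < d -> coprime `|n| `|d| ->
  numq (n%:~R / d%:~R) = n /\ denq (n%:~R / d%:~R) = d.
Proof.
move=> d_gt0 co; rewrite coprimeq_num // coprimeq_den // gtr0_sg // mul1r gt_eqF //.
by rewrite gtr0_norm.
Qed.

Lemma num_den_subr_inv (c : int) (x : rat) : 0 < x ->
  numq (c%:~R - x^-1) = c * numq x - denq x /\ denq (c%:~R - x^-1) = numq x.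
Proof.
move=> x_gt0; have nx_gt0 : 0 < numq x by rewrite numq_gt0.
have -> : c%:~R - x^-1 = (c * numq x - denq x)%:~R / (numq x)%:~R :> rat.
  rewrite -[in LHS](divq_num_den x) invf_div intrB intrM.
  by field; rewrite intr_eq0 gt_eqF.
apply: num_den_divz => //; have /eqP co := coprime_num_den x.
have : gcdz (c * numq x - denq x) (numq x) = 1 by rewrite gcdzC gcdzMDl gcdzN /gcdz co.
by move=> /eqP; rewrite eqz_nat.
Qed.

Lemma kseq_cons k i j : (i <= j)%N -> kseq k i j = k i :: kseq k i.+1 j.
Proof. by move=> le_ij; rewrite /kseq subSS subSn. Qed.

Lemma cf_kseq_cons k j s : (j < s)%N ->
  cf (kseq k j s) = (k j)%:~R - (cf (kseq k j.+1 s))^-1.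
Proof. by move=> lt_js; rewrite (kseq_cons k (ltnW lt_js)) (kseq_cons k lt_js). Qed.

Lemma cf_kseq_last k s : cf (kseq k s s) = (k s)%:~R.
Proof. by rewrite kseq_cons // /kseq subnn. Qed.

Lemma nn_numq k j s : (j <= s)%N -> nn k j s = numq (cf (kseq k j s)).
Proof. by rewrite /nn => ->. Qed.

Lemma nn_succ k s : nn k s.+1 s = 1.
Proof. by rewrite /nn ltnn eqxx. Qed.

Lemma nn_succ2 k s : nn k s.+2 s = 0.
Proof. by rewrite /nn ltnNge leqW // eqSS; elim: s. Qed.

Section ContinuedFraction.

Variables (k : nat -> int) (s : nat).
Hypothesis k_ge2 : forall j, (2 <= j <= s)%N -> 2 <= k j.

Lemma cf_kseq_gt1 j : (2 <= j <= s)%N -> 1 < cf (kseq k j s).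
Proof.
move=> /andP[j_ge2 /subnK]; move: (s - j)%N => d.
elim: d j j_ge2 => [|d IHd] j j_ge2 def_s.
  by rewrite -def_s cf_kseq_last ltr1z; apply: k_ge2; lia.
have cf_gt1 : 1 < cf (kseq k j.+1 s) by apply: IHd; lia.
have kj : (2 : rat) <= (k j)%:~R by rewrite (ler_int rat 2); apply: k_ge2; lia.
have /andP[] : 0 < (cf (kseq k j.+1 s))^-1 < 1 by rewrite invr_gt0 invf_lt1; lra.
by rewrite (@cf_kseq_cons k j s); [lra | lia].
Qed.

Lemma cf_kseq_succ_gt0 j : (0 < j < s)%N -> 0 < cf (kseq k j.+1 s).
Proof. by move=> j_bd; have := @cf_kseq_gt1 j.+1 (ltac:(lia)); lra. Qed.

Lemma denq_cf_kseq j : (1 <= j <= s)%N -> denq (cf (kseq k j s)) = nn k j.+1 s.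
Proof.
move=> /andP[j_ge1 le_js]; have [->|ne_js] := eqVneq j s.
  by rewrite cf_kseq_last denq_int nn_succ.
have lt_js : (j < s)%N by rewrite ltn_neqAle ne_js.
have cf_gt0 : 0 < cf (kseq k j.+1 s) by apply: cf_kseq_succ_gt0; rewrite j_ge1.
by rewrite cf_kseq_cons // (num_den_subr_inv _ cf_gt0).2 nn_numq.
Qed.

Lemma nn_rec j : (1 <= j <= s)%N -> nn k j s = k j * nn k j.+1 s - nn k j.+2 s.
Proof.
move=> /andP[j_ge1 le_js]; have [->|ne_js] := eqVneq j s.
  by rewrite nn_numq // cf_kseq_last numq_int nn_succ nn_succ2 mulr1 subr0.
have lt_js : (j < s)%N by rewrite ltn_neqAle ne_js.
have cf_gt0 : 0 < cf (kseq k j.+1 s) by apply: cf_kseq_succ_gt0; rewrite j_ge1.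
rewrite nn_numq 1?ltnW // cf_kseq_cons // (num_den_subr_inv _ cf_gt0).1.
by rewrite denq_cf_kseq -?nn_numq // lt_js.
Qed.

Lemma nn_gt0 j : (2 <= j <= s.+1)%N -> 0 < nn k j s.
Proof.
move=> /andP[j_ge2 le_js]; have [->|ne_js] := eqVneq j s.+1; first by rewrite nn_succ.
have := @cf_kseq_gt1 j (ltac:(lia)); rewrite nn_numq ?numq_gt0; [lra | lia].
Qed.

Lemma nn1_nn2_of_cf (p q : nat) : (0 < s)%N -> (0 < q)%N -> coprime p q ->
  cf (kseq k 1 s) = p%:R / q%:R -> nn k 1 s = p /\ nn k 2 s = q.
Proof.
move=> s_gt0 q_gt0 co_pq cf_pq.
have [] : numq (cf (kseq k 1 s)) = p /\ denq (cf (kseq k 1 s)) = q.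
  by rewrite cf_pq !pmulrn; apply: num_den_divz; rewrite ?ltz_nat.
by rewrite -nn_numq // denq_cf_kseq ?s_gt0.
Qed.

End ContinuedFraction.

Lemma size_alist k s a i : size (alist k s a i) = i.
Proof. by elim: i => //= i IHi; rewrite size_rcons IHi. Qed.

Lemma nth_alist k s a i t : (t < i)%N -> nth 0 (alist k s a i) t = aa k s a t.+1.
Proof.
rewrite /aa /=; elim: i => // i IHi lt_ti.
rewrite [alist _ _ _ i.+1]/= nth_rcons size_alist.
have [/IHi //|le_it] := ltnP t i.
have -> : t = i by lia.
by rewrite eqxx nth_rcons size_alist ltnn eqxx.
Qed.

(* The a_i are the greedy digits of a for the weights n_{i+1,s}; digit_rem is the
   remainder left after i digits. *)
Definition digit_rem k s a i := a - \sum_(t < i) nn k t.+2 s * aa k s a t.+1.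

Lemma digit_rem_succ k s a i :
  digit_rem k s a i.+1 = digit_rem k s a i - nn k i.+2 s * aa k s a i.+1.
Proof. by rewrite /digit_rem big_ord_recr /= opprD addrA. Qed.

Lemma aa_succ k s a i :
  aa k s a i.+1 = Num.floor ((digit_rem k s a i)%:~R / (nn k i.+2 s)%:~R : rat).
Proof.
rewrite /aa /= nth_rcons size_alist ltnn eqxx /digit_rem.
by congr (Num.floor ((_ - _)%:~R / _)); apply: eq_bigr => t _; rewrite nth_alist.
Qed.

Section Digits.

Variables (k : nat -> int) (s : nat) (a : int).
Hypothesis nn_gt0 : forall t, (2 <= t <= s.+1)%N -> 0 < nn k t s.
Hypotheses (a_ge0 : 0 <= a) (a_lt_nn : a < nn k 1 s).

Lemma digit_rem_bounds i : (i <= s)%N -> 0 <= digit_rem k s a i < nn k i.+1 s.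
Proof.
elim: i => [|i IHi] le_is; first by rewrite /digit_rem big_ord0 subr0 a_ge0.
have /andP[rem_ge0 _] := IHi (ltnW le_is).
have nn_i2 : 0 < nn k i.+2 s by apply: nn_gt0; lia.
rewrite digit_rem_succ aa_succ subr_ge0 ltrBlDr.
by rewrite mulrC floor_divz_le //= addrC floor_divz_gt.
Qed.

Lemma aprime_succ j : (j <= s)%N -> aprime k s a j.+1 = digit_rem k s a j.
Proof.
move/subnK; move: (s - j)%N => d; elim: d j => [|d IHd] j def_s.
  have /andP[rem_ge0] := digit_rem_bounds (leqnn s).
  by move: def_s; rewrite add0n => ->; rewrite /aprime big_geq // nn_succ; lia.
rewrite /aprime big_ltn; last by lia.
rewrite -/(aprime k s a j.+2) IHd; last by lia.
by rewrite digit_rem_succ addrC subrK.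
Qed.

Lemma aprime1 : aprime k s a 1 = a.
Proof. by rewrite aprime_succ // /digit_rem big_ord0 subr0. Qed.

Lemma aprime_lt_nn j : (1 <= j <= s)%N -> aprime k s a j < nn k j s.
Proof.
case: j => // j /andP[_ lt_js].
rewrite aprime_succ; last exact: ltnW.
by case/andP: (digit_rem_bounds (ltnW lt_js)).
Qed.

Lemma aa_ge0 t : (1 <= t <= s)%N -> 0 <= aa k s a t.
Proof.
case: t => // t /andP[_ lt_ts]; rewrite aa_succ floor_ge0 divr_ge0 // ler0z.
  by case/andP: (digit_rem_bounds (ltnW lt_ts)).
by apply/ltW/nn_gt0; lia.
Qed.

End Digits.

Definition chain_form (kappa w : nat -> int) (t : nat) : int :=
  w t.-1 - kappa t * w t + w t.+1.

Section ChainArithmetic.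

Variables (s : nat) (N A : nat -> int).
Hypothesis N_gt0 : forall t, (1 <= t <= s.+1)%N -> 0 < N t.

(* For N = n_{.,s} and A = a_, [tail j] is a'_j. *)
Local Notation tail j := (\sum_(j <= t < s.+1) N t.+1 * A t).

Lemma chain_ge0_propagate (w : nat -> int) :
  (forall j, (1 <= j <= s)%N -> tail j < N j) ->
  (forall j, (1 <= j <= s)%N -> N j.+1 * w j.-1 - tail j <= N j * w j) ->
  forall j0 t, (j0 <= t <= s)%N -> 0 <= w j0 -> 0 <= w t.
Proof.
move=> tail_lt lower j0 t /andP[]; elim: t => [|t IHt] le_j0t le_ts w_j0.
  by move: le_j0t w_j0; rewrite leqn0 => /eqP->.
have [<-//|ne_j0t] := eqVneq j0 t.+1.
have w_t : 0 <= w t by apply: IHt => //; lia.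
have N_t1 : 0 < N t.+1 by apply: N_gt0; lia.
have N_t2 : 0 <= N t.+2 by apply/ltW/N_gt0; lia.
have := lower t.+1 (ltac:(lia)); have := tail_lt t.+1 (ltac:(lia)) => /= lt_N le_N.
nia.
Qed.

Variable kappa : nat -> int.
Hypotheses (N_succ : N s.+1 = 1) (N_succ2 : N s.+2 = 0).
Hypothesis N_rec : forall t, (1 <= t <= s)%N -> N t = kappa t * N t.+1 - N t.+2.

Section ChainSequence.

Variable w : nat -> int.
Hypothesis w_succ : w s.+1 = 0.

Lemma sum_chain_form j : (1 <= j <= s)%N ->
  \sum_(j <= t < s.+1) N t.+1 * chain_form kappa w t = N j.+1 * w j.-1 - N j * w j.
Proof.
move=> /andP[j_ge1 /subnK]; move: (s - j)%N => d.
elim: d j j_ge1 => [|d IHd] j j_ge1 def_s.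
  rewrite add0n in def_s; subst j.
  rewrite big_nat1 (@N_rec s); last by rewrite j_ge1 leqnn.
  by rewrite N_succ N_succ2 /chain_form w_succ !mul1r mulr1 subr0 addr0.
rewrite big_ltn; last by lia.
rewrite IHd; [|lia|lia].
by rewrite (@N_rec j) /chain_form /=; [ring | lia].
Qed.

Lemma chain_form_le_tail : (forall t, (1 <= t <= s)%N -> chain_form kappa w t <= A t) ->
  forall j, (1 <= j <= s)%N -> N j.+1 * w j.-1 - tail j <= N j * w j.
Proof.
move=> le_A j j_bd; rewrite lerBlDr -lerBlDl -sum_chain_form //.
apply: ler_sum_nat => t t_bd; apply: ler_wpM2l; first by apply/ltW/N_gt0; lia.
by apply: le_A; lia.
Qed.

Lemma chain_form_le_of_bracket :
  (forall j, (1 <= j <= s)%N -> N j.+1 * w j.-1 - tail j <= N j * w j) ->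
  (forall j, (2 <= j <= s)%N -> N j * w j < N j.+1 * w j.-1 - tail j + N j) ->
  forall t, (1 <= t <= s)%N -> chain_form kappa w t <= A t.
Proof.
move=> lower upper t t_bd.
(* The partial sums S j lie in (-N j, 0], so each of their increments is < N t.+1. *)
pose S j := \sum_(j <= t < s.+1) N t.+1 * (chain_form kappa w t - A t).
have S_tail j : (1 <= j <= s)%N -> S j = N j.+1 * w j.-1 - N j * w j - tail j.
  move=> j_bd; rewrite -sum_chain_form // /S -sumrB.
  by apply: eq_bigr => i _; rewrite mulrBr.
have S_le0 : S t <= 0 by rewrite S_tail // subr_le0 lerBlDr -lerBlDl lower.
have S_gt : - N t.+1 < S t.+1.
  have [->|ne_ts] := eqVneq t s; first by rewrite /S big_geq // N_succ oppr_lt0.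
  by rewrite S_tail; have := upper t.+1; lia.
have N_t1 : 0 < N t.+1 by apply: N_gt0; lia.
have : N t.+1 * (chain_form kappa w t - A t) < N t.+1 * 1.
  by move: S_le0 S_gt; rewrite /S big_ltn /=; [lia | lia].
by rewrite ltr_pM2l //; lia.
Qed.

End ChainSequence.

Fixpoint chain_solution (t : nat) : int :=
  match t with
  | t1.+1 => if t1 is t2.+1 then kappa t1 * chain_solution t1 - chain_solution t2 - A t1 else 0
  | 0 => 0
  end.

Lemma exists_chain_form_eq : exists w : nat -> int,
  [/\ w 0%N = 0, w 1%N = 0, w s.+1 = 0 &
      forall t, (1 <= t <= s)%N -> chain_form kappa w t = (t == s)%:R * tail 1 - A t].
Proof.
pose w t := if (t <= s)%N then chain_solution t else 0.
have w_succ : w s.+1 = 0 by rewrite /w ltnn.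
have w_0 : w 0%N = 0 by rewrite /w; case: (_ <= _)%N.
have w_1 : w 1%N = 0 by rewrite /w; case: (_ <= _)%N.
have form_lt t : (1 <= t < s)%N -> chain_form kappa w t = - A t.
  case: t => // t /andP[_ lt_ts]; rewrite /chain_form /w /= !ifT; [|lia|lia|lia].
  by case: t lt_ts => [|t] _ /=; ring.
exists w; split=> //.
move=> t /andP[t_ge1 le_ts]; have [def_t|ne_ts] := eqVneq t s; last first.
  by rewrite mul0r add0r form_lt // t_ge1 ltn_neqAle ne_ts.
have s_ge1 : (1 <= s)%N by rewrite -def_t.
have := @sum_chain_form w w_succ 1 (ltac:(lia)).
rewrite !big_nat_recr //= N_succ !mul1r w_0 w_1 !mulr0 subr0.
rewrite (eq_big_nat _ _ (F2 := fun t => - (N t.+1 * A t))); last first.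
  by move=> i i_bd; rewrite form_lt // mulrN.
by rewrite sumrN def_t addrK addrC => /eqP; rewrite subr_eq0 => /eqP.
Qed.

End ChainArithmetic.

Definition bdot G s k mf (x : Vtx G s -> rat) (v : Vtx G s) : rat :=
  \sum_u x u * (GMform G s k mf u v)%:~R.

Definition chain_entry G s (x : Vtx G s -> int) (t : nat) : int :=
  if t is t'.+1 then (if insub t' is Some j then x (inr j) else 0) else 0.
Arguments chain_entry : simpl never.

(* The coordinate on v_0 absorbs the term -m_f * x(v_1) coming from the Euler
   number -k_1-m_f of v_1, so that the chain equations only involve the k_j. *)
Definition chain_coord G s mf (v0 : 'I_(rg_n G)) (x : Vtx G s -> int) (t : nat) : int :=
  if t is 0 then x (inl v0) - mf * chain_entry x 1 else chain_entry x t.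

Section Lattice.

Variables (G : Defs.rgraph) (s : nat) (k : nat -> int) (mf : int).
Local Notation V := (Vtx G s).
Local Notation bdot := (bdot k mf).
Local Notation cast x := (fun u => (x u)%:~R : rat).
Implicit Types (x : V -> int) (y z : V -> rat).

Lemma bform_bvec y v : bform G s k mf y (bvec G s v) = bdot y v.
Proof.
rewrite /bform exchange_big (bigD1 v) //= [X in _ + X]big1 ?addr0.
  by apply: eq_bigr => u _; rewrite /bvec eqxx mulr1.
by move=> w /negbTE ne_wv; apply: big1 => u _; rewrite /bvec ne_wv mulr0 mul0r.
Qed.

Lemma bform_bchain y (j : 'I_s) : bform G s k mf y (bchain G s (val j).+1) = bdot y (inr j).
Proof.
by rewrite -bform_bvec; apply: eq_bigr => u _; apply: eq_bigr => -[w|w].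
Qed.

Lemma bdot_linear y y1 y2 (c1 c2 : rat) v : y =1 (fun u => c1 * y1 u + c2 * y2 u) ->
  bdot y v = c1 * bdot y1 v + c2 * bdot y2 v.
Proof.
move=> def_y; rewrite /bdot !mulr_sumr -big_split /=.
by apply: eq_bigr => u _; rewrite def_y mulrDl !mulrA.
Qed.

Lemma chain_entry_inr x (j : 'I_s) : chain_entry x (val j).+1 = x (inr j).
Proof. by rewrite /chain_entry valK. Qed.

Lemma chain_entry_out x t : (s <= t)%N -> chain_entry x t.+1 = 0.
Proof. by move=> le_st; rewrite /chain_entry insubF // ltnNge le_st. Qed.

Lemma sum_chain_entry_delta x c :
  \sum_(j < s) (x (inr j))%:~R * ((val j).+1 == c)%:R = (chain_entry x c)%:~R :> rat.
Proof.
case: c => [|c]; first by rewrite big1 // => j _; rewrite mulr0.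
under eq_bigr do rewrite eqSS.
have [lt_cs|le_sc] := ltnP c s; last first.
  rewrite chain_entry_out // big1 // => j _.
  by rewrite ltn_eqF ?mulr0 // (leq_trans (ltn_ord j) le_sc).
rewrite (bigD1 (Ordinal lt_cs)) //= eqxx mulr1 big1 ?addr0 -?(chain_entry_inr x (Ordinal lt_cs)) //.
by move=> j /negbTE ne_j; rewrite -(inj_eq val_inj) /= in ne_j; rewrite ne_j mulr0.
Qed.

Lemma GMform_inl_inr (y : 'I_(rg_n G)) (j : 'I_s) :
  (GMform G s k mf (inl y) (inr j))%:~R = (val y == rg_last G)%:R * (val j == 0)%:R :> rat.
Proof. by rewrite /GMform; case: (_ == _); case: (_ == _); rewrite /= ?mulr0 ?mulr1. Qed.

Lemma GMform_inr_inl (j : 'I_s) (y : 'I_(rg_n G)) :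
  (GMform G s k mf (inr j) (inl y))%:~R = (val y == rg_last G)%:R * ((val j).+1 == 1)%:R :> rat.
Proof. by rewrite /GMform eqSS; case: (_ == _); case: (_ == _); rewrite /= ?mulr0 ?mulr1. Qed.

Lemma GMform_inr_inr (j' j : 'I_s) :
  (GMform G s k mf (inr j') (inr j))%:~R =
    ((val j').+1 == (val j).+1)%:R * - (k (val j).+1 + (val j == 0)%:R * mf)%:~R
    + ((val j').+1 == (val j).+2)%:R + ((val j').+1 == val j)%:R :> rat.
Proof.
rewrite /GMform -val_eqE !eqSS; move: (val j') (val j) => a b.
have [lt_ab|lt_ba|<-] := ltngtP a b.
- rewrite (ltn_eqF (leqW lt_ab)) [b == _]eq_sym /=.
  by case: (_ == _); rewrite /= !mul0r ?add0r ?addr0.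
- rewrite (gtn_eqF (leqW lt_ba)) (ltn_eqF (leqW lt_ba)) orbF.
  by case: (_ == _); rewrite /= !mul0r ?add0r ?addr0.
- rewrite (gtn_eqF (ltnSn a)) (ltn_eqF (ltnSn a)) /= !addr0 mul1r.
  by case: a => [|a]; rewrite /= ?mul1r ?mul0r ?addr0 -?rmorphN ?opprD.
Qed.

Lemma bdot_inl x v :
  bdot (cast x) (inl v) = \sum_(y < rg_n G) (x (inl y))%:~R * (gbar_form G y v)%:~R
                          + (val v == rg_last G)%:R * (chain_entry x 1)%:~R.
Proof.
rewrite /bdot big_sumType; congr (_ + _).
rewrite -sum_chain_entry_delta mulr_sumr; apply: eq_bigr => j _.
by rewrite GMform_inr_inl mulrCA.
Qed.

Variables (v0 : 'I_(rg_n G)) (v0_last : val v0 = rg_last G).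

Lemma bdot_inr x (j : 'I_s) :
  bdot (cast x) (inr j) = (chain_form k (chain_coord mf v0 x) (val j).+1)%:~R.
Proof.
rewrite /bdot big_sumType.
have -> : \sum_(y < rg_n G) (x (inl y))%:~R * (GMform G s k mf (inl y) (inr j))%:~R
          = (val j == 0)%:R * (x (inl v0))%:~R :> rat.
  under eq_bigr do rewrite GMform_inl_inr.
  rewrite (bigD1 v0) //= v0_last eqxx mul1r mulrC big1 ?addr0 // => y ne_yv0.
  have /negbTE -> : val y != rg_last G by rewrite -v0_last (inj_eq val_inj).
  by rewrite mul0r mulr0.
under eq_bigr do rewrite GMform_inr_inr !mulrDr mulrA.
rewrite !big_split /= -mulr_suml !sum_chain_entry_delta /chain_form /chain_coord.
case: j => -[|j] lt_js /=; rewrite ?intrD ?intrB ?intrM; ring.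
Qed.

Lemma chain_entry_eq0 x : (forall j, x (inr j) = 0) -> forall t, chain_entry x t = 0.
Proof. by move=> x_chain [|t] //; rewrite /chain_entry; case: insub. Qed.

Variables (a : int) (gs l : V -> rat).
Hypothesis l_min : is_lprime G s k mf a gs l.

Lemma bdot_lprime_le0 v : bdot l v <= 0.
Proof. by case: l_min => _ l_SQ _; rewrite -bform_bvec. Qed.

Lemma lprime_shift_ge0 x u : (forall v, bdot l v + bdot (cast x) v <= 0) -> 0 <= x u.
Proof.
case: l_min => -[zl def_l] _ l_le shift_SQ.
pose y w := l w + (x w)%:~R.
have y_coset : in_coset G s a gs y.
  by exists (fun u => zl u + x u) => w; rewrite /y def_l intrD addrA.
have y_SQ : in_SQ G s k mf y.
  move=> v; rewrite bform_bvec (@bdot_linear _ l (cast x) 1 1).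
    by rewrite !mul1r.
  by move=> w; rewrite !mul1r.
by have := l_le y y_coset y_SQ u; rewrite lerDl ler0z.
Qed.

Lemma gbar_cycle_v0_ge0 x : (forall j, x (inr j) = 0) ->
  (forall v, bdot (cast x) (inl v) <= 0) -> 0 <= x (inl v0).
Proof.
move=> x_chain x_gbar; rewrite leNgt; apply/negP => x_v0_lt0.
suff : 0 <= x (inl v0) by rewrite leNgt x_v0_lt0.
apply: lprime_shift_ge0 => -[v|j]; first by rewrite -[0]addr0 lerD ?bdot_lprime_le0.
have e0 := chain_entry_eq0 x_chain.
case: j => -[|j] lt_js; rewrite bdot_inr /chain_form /chain_coord /= !e0 !mulr0 ?subr0 ?addr0.
  by rewrite -[0]addr0 lerD ?bdot_lprime_le0 // lerz0 ltW.
exact: bdot_lprime_le0.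
Qed.

Variable mv : nat -> int.
Hypothesis mv_last : mv (rg_last G) = mf.
Hypothesis mv_div : forall v, (v < rg_n G)%N ->
  \sum_(u < rg_n G) mv u * gbar_form G u v + (v == rg_last G)%:R = 0.

Lemma sum_mv_gbar_form (v : 'I_(rg_n G)) :
  \sum_(y < rg_n G) (mv y)%:~R * (gbar_form G y v)%:~R = - (val v == rg_last G)%:R :> rat.
Proof.
apply/eqP; rewrite -subr_eq0 opprK; apply/eqP.
have /(congr1 (fun z : int => z%:~R : rat)) := mv_div (ltn_ord v).
rewrite rmorphD rmorph_sum rmorph_nat rmorph0 /=.
by under eq_bigr do rewrite rmorphM.
Qed.

Lemma mf_ge0 : 0 <= mf.
Proof.
(* Minimality of l' against the divisor of f restricted to \bar G. *)
pose D (u : V) : int := if u is inl y then mv y else 0.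
have : 0 <= D (inl v0).
  apply: gbar_cycle_v0_ge0 => // v.
  rewrite bdot_inl chain_entry_eq0 // mulr0 addr0 sum_mv_gbar_form oppr_le0.
  by case: (_ == _).
by rewrite /= v0_last mv_last.
Qed.

Lemma chain_coord0_ge0 x : (forall v, bdot (cast x) (inl v) <= 0) -> 0 <= chain_coord mf v0 x 0.
Proof.
(* Subtracting x(v_1) times the divisor of f leaves the pairings with \bar G unchanged
   and decouples v_0 from the chain. *)
move=> x_gbar; pose x' (u : V) : int := if u is inl y then x u - chain_entry x 1 * mv y else 0.
have : 0 <= x' (inl v0).
  apply: gbar_cycle_v0_ge0 => // v; rewrite bdot_inl chain_entry_eq0 // mulr0 addr0.
  have -> : \sum_(y < rg_n G) ((x' (inl y))%:~R : rat) * (gbar_form G y v)%:~R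
      = \sum_(y < rg_n G) (x (inl y))%:~R * (gbar_form G y v)%:~R
        - (chain_entry x 1)%:~R * \sum_(y < rg_n G) (mv y)%:~R * (gbar_form G y v)%:~R.
    rewrite mulr_sumr -sumrB; apply: eq_bigr => y _.
    by rewrite /x' rmorphB rmorphM /= mulrBl mulrA.
  by rewrite sum_mv_gbar_form mulrN opprK mulrC -bdot_inl.
by rewrite /x' /= v0_last mv_last mulrC.
Qed.

Hypothesis gs_dual : is_gs G s k mf gs.

Variables (N A : nat -> int).
Hypotheses (N_succ : N s.+1 = 1) (N_succ2 : N s.+2 = 0).
Hypothesis N_gt0 : forall t, (1 <= t <= s.+1)%N -> 0 < N t.
Hypothesis N_rec : forall t, (1 <= t <= s)%N -> N t = k t * N t.+1 - N t.+2.
Hypothesis A_ge0 : forall t, (1 <= t <= s)%N -> 0 <= A t.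
Hypothesis tail1 : \sum_(1 <= t < s.+1) N t.+1 * A t = a.
Hypothesis tail_lt : forall j, (1 <= j <= s)%N -> \sum_(j <= t < s.+1) N t.+1 * A t < N j.

Lemma nonpos_cycle_bdot_chain_eq0 (Y : V -> int) : (forall u, Y u <= 0) ->
  (forall v, bdot (cast Y) (inl v) <= 0) ->
  (forall j : 'I_s, bdot (cast Y) (inr j) <= (A (val j).+1)%:~R) ->
  forall j : 'I_s, bdot (cast Y) (inr j) = 0.
Proof.
move=> Y_le0 Y_gbar Y_chain; set w := chain_coord mf v0 Y.
have w_succ : w s.+1 = 0 by rewrite /w /= chain_entry_out.
have w_le0 t : (1 <= t <= s)%N -> w t <= 0.
  by case: t => // t /andP[_ lt_ts]; rewrite /w /= -[t]/(val (Ordinal lt_ts)) chain_entry_inr.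
have form_le t : (1 <= t <= s)%N -> chain_form k w t <= A t.
  case: t => // t /andP[_ lt_ts]; rewrite -(ler_int rat).
  by rewrite -[t]/(val (Ordinal lt_ts)) -bdot_inr Y_chain.
have w_ge0 t : (t <= s)%N -> 0 <= w t.
  have lower := chain_form_le_tail N_gt0 N_succ N_succ2 N_rec w_succ form_le.
  move=> le_ts; apply: (chain_ge0_propagate N_gt0 tail_lt lower (j0 := 0)) => //.
  exact: chain_coord0_ge0.
have w_chain0 t : (1 <= t <= s)%N -> w t = 0.
  by move=> t_bd; apply/eqP; rewrite eq_le w_le0 // w_ge0 //; case/andP: t_bd.
have w_eq0 t : (t <= s.+1)%N -> w t = 0.
  case: t => [_|t le_ts]; last first.
    by have [->|ne_ts] := eqVneq t s; [exact: w_succ | apply: w_chain0; lia].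
  apply/eqP; rewrite eq_le w_ge0 // andbT /w /=.
  have -> : chain_entry Y 1 = 0.
    case: (posnP s) => [s0|s_gt0]; first by rewrite chain_entry_out // s0.
    by have := w_chain0 1; rewrite s_gt0; apply.
  by rewrite mulr0 subr0 Y_le0.
move=> j; have lt_js : (val j < s)%N := ltn_ord j.
by rewrite bdot_inr -/w /chain_form !w_eq0 ?mulr0 ?subr0 ?addr0 //; lia.
Qed.

Lemma exists_coset_chain_witness : exists c : V -> rat,
  [/\ in_coset G s a gs c, forall v, bdot c (inl v) = 0
    & forall j : 'I_s, bdot c (inr j) = - (A (val j).+1)%:~R].
Proof.
(* The defect a of W at v_s is cancelled by -a g_s. *)
have [W [W0 W1 W_succ W_form]] := exists_chain_form_eq A N_succ N_succ2 N_rec.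
pose Wv (u : V) : int := if u is inr j then W (val j).+1 else 0.
have Wv_entry t : chain_entry Wv t.+1 = if (t < s)%N then W t.+1 else 0.
  have [lt_ts|le_st] := ltnP t s; last exact: chain_entry_out.
  by rewrite -[t]/(val (Ordinal lt_ts)) chain_entry_inr.
have Wv_coord t : (t <= s.+1)%N -> chain_coord mf v0 Wv t = W t.
  case: t => [_|t le_ts] /=; first by rewrite Wv_entry W0 W1; case: ifP; rewrite mulr0 subr0.
  by rewrite Wv_entry; case: ltnP => // le_st; have -> : t = s by lia.
pose c u := - a%:~R * gs u + (Wv u)%:~R.
have bdot_c v : bdot c v = - a%:~R * bdot gs v + 1 * bdot (cast Wv) v.
  by apply: bdot_linear => u; rewrite mul1r.
have gs_bdot v : bdot gs v = bchain G s s v by rewrite -bform_bvec gs_dual.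
exists c; split; first by exists Wv.
  move=> v; rewrite bdot_c gs_bdot bdot_inl Wv_entry big1 => [|y _]; last by rewrite mul0r.
  by case: ifP; rewrite /= ?W1 !mulr0 add0r.
move=> j; have lt_js : (val j < s)%N := ltn_ord j.
rewrite bdot_c gs_bdot bdot_inr /chain_form !Wv_coord; [|lia|lia|lia].
rewrite -/(chain_form k W (val j).+1) W_form ?tail1; last lia.
by rewrite /= mul1r rmorphB rmorphM /= rmorph_nat; ring.
Qed.

Lemma bdot_lprime_chain (j : 'I_s) : bdot l (inr j) = - (A (val j).+1)%:~R.
Proof.
have [c [[zc def_c] c_gbar c_chain]] := exists_coset_chain_witness.
case: l_min => -[zl def_l] _ l_le.
pose Y u := zl u - zc u.
have def_Y u : l u - c u = (Y u)%:~R by rewrite def_l def_c rmorphB /=; ring.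
have bdot_Y v : bdot (cast Y) v = 1 * bdot l v + (-1) * bdot c v.
  by apply: bdot_linear => u; rewrite -def_Y; ring.
have c_SQ : in_SQ G s k mf c.
  move=> -[v|j']; rewrite bform_bvec ?c_gbar // c_chain oppr_le0 ler0z.
  by apply: A_ge0; rewrite /=; apply: ltn_ord.
have Y_le0 u : Y u <= 0 by rewrite -(ler_int rat) -def_Y subr_le0 l_le //; exists zc.
have : bdot (cast Y) (inr j) = 0.
  apply: nonpos_cycle_bdot_chain_eq0 => // [v|j'].
    by rewrite bdot_Y c_gbar mulr0 addr0 mul1r bdot_lprime_le0.
  by rewrite bdot_Y c_chain; have := bdot_lprime_le0 (inr j'); lra.
rewrite bdot_Y c_chain; lra.
Qed.

Definition cycle_seq (i : nat) (u : nat -> int) (t : nat) : int :=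
  if t is 0 then i%:Z - mf * u 1%N else if (t <= s)%N then u t else 0.

Lemma bform_zcyc_chain i u j : (0 < s)%N -> (1 <= j <= s)%N ->
  bform G s k mf (fun v => zcyc G s i u v + l v) (bchain G s j)
  = (chain_form k (cycle_seq i u) j - A j)%:~R.
Proof.
move=> s_gt0; case: j => // j /andP[_ lt_js].
pose z (v : V) : int := if v is inl y then (if val y == rg_last G then i%:Z else 0) else
                       if v is inr t then u (val t).+1 else 0.
have z_coord t : chain_coord mf v0 z t = cycle_seq i u t.
  case: t => [|t] /=; first by rewrite v0_last eqxx -[1%N]/(val (Ordinal s_gt0)).+1 chain_entry_inr.
  have [lt_ts|le_st] := ltnP t s; last by rewrite chain_entry_out // leqNgt le_st.
  by rewrite -[t]/(val (Ordinal lt_ts)) chain_entry_inr /=.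
rewrite -[j]/(val (Ordinal lt_js)) bform_bchain (@bdot_linear _ (cast z) l 1 1).
  by rewrite bdot_inr bdot_lprime_chain /chain_form !z_coord rmorphB; ring.
by case=> [y|t]; rewrite !mul1r //=; case: (_ == _).
Qed.

End Lattice.

Section CycleBounds.

Variables (k : nat -> int) (s p q : nat) (mf a : int) (i : nat).
Hypotheses (s_gt0 : (0 < s)%N) (mf_ge0 : 0 <= mf) (a_lt_p : a < p%:Z).
Hypotheses (nn1 : nn k 1 s = p%:Z) (nn2 : nn k 2 s = q%:Z).
Hypothesis nn_gt0 : forall t, (1 <= t <= s.+1)%N -> 0 < nn k t s.
Hypothesis nn_rec : forall t, (1 <= t <= s)%N -> nn k t s = k t * nn k t.+1 s - nn k t.+2 s.
Hypothesis aprime1 : aprime k s a 1 = a.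
Hypothesis aprime_lt_nn : forall j, (1 <= j <= s)%N -> aprime k s a j < nn k j s.

Local Notation N := (fun t => nn k t s).
Local Notation w u := (cycle_seq s mf i u).

Lemma cycle_seq_succ u : w u s.+1 = 0.
Proof. by rewrite /cycle_seq ltnn. Qed.

Lemma pqmf_gt0 : 0 < p%:Z + q%:Z * mf.
Proof.
have : 0 <= q%:Z * mf by rewrite mulr_ge0.
by have := @nn_gt0 1%N isT; rewrite nn1; lia.
Qed.

Lemma ubound_le_of_chain_form u :
  (forall t, (1 <= t <= s)%N -> chain_form k (w u) t <= aa k s a t) ->
  u1bound p q mf a i <= u 1%N /\ (forall j, (1 < j <= s)%N -> ubound k s a j (u j.-1) <= u j).
Proof.
move=> le_aa; have lower : forall j, (1 <= j <= s)%N ->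
    nn k j.+1 s * w u j.-1 - aprime k s a j <= nn k j s * w u j :=
  chain_form_le_tail (N := N) nn_gt0 (nn_succ k s) (nn_succ2 k s) nn_rec (cycle_seq_succ u) le_aa.
split.
  rewrite /u1bound ceil_divz_le ?pqmf_gt0 //.
  have := lower 1%N; rewrite /= s_gt0 nn1 nn2 aprime1 => /(_ isT); nia.
move=> j j_bd; rewrite /ubound ceil_divz_le; last by apply: nn_gt0; lia.
have := lower j (ltac:(lia)); case: j j_bd => [|[|j]] //= j_bd.
by rewrite (ltnW j_bd) j_bd; lia.
Qed.

Local Notation u := (useq k s p q mf a i).

Lemma useq_bracket j : (1 <= j <= s)%N ->
  (nn k j.+1 s * w u j.-1 - aprime k s a j <= nn k j s * w u j) /\
  ((1 < j)%N -> nn k j s * w u j < nn k j.+1 s * w u j.-1 - aprime k s a j + nn k j s).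
Proof.
case: j => // -[_|j /andP[_ lt_js]].
  have := ceil_divz_ge rat ((i * q)%N%:Z - a) pqmf_gt0.
  rewrite -[Num.ceil _]/(u 1%N) /= s_gt0 nn1 nn2 aprime1 PoszM; split=> //; nia.
have nn_j2 : 0 < nn k j.+2 s by apply: nn_gt0; lia.
have w1 : w u j.+1 = u j.+1 by rewrite /cycle_seq ltnW.
have w2 : w u j.+2 = u j.+2 by rewrite /cycle_seq lt_js.
have := ceil_divz_ge rat (u j.+1 * nn k j.+3 s - aprime k s a j.+2) nn_j2.
have := ceil_divz_lt rat (u j.+1 * nn k j.+3 s - aprime k s a j.+2) nn_j2.
rewrite -[Num.ceil _]/(u j.+2) -[j.+2.-1]/j.+1 w1 w2.
by split=> [|_]; rewrite mulrC; lia.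
Qed.

Lemma useq_chain_form_le t : (1 <= t <= s)%N -> chain_form k (w u) t <= aa k s a t.
Proof.
apply: (chain_form_le_of_bracket (N := N) nn_gt0 (nn_succ k s) (nn_succ2 k s) nn_rec
          (cycle_seq_succ u)) => j j_bd; first by case: (useq_bracket j_bd).
by case: (useq_bracket (j := j) (ltac:(lia))) => _; apply; lia.
Qed.

Lemma useq_ge0 t : (1 <= t <= s)%N -> 0 <= u t.
Proof.
move=> t_bd; have u1_ge0 : 0 <= u 1%N.
  have := ceil_divz_ge rat ((i * q)%N%:Z - a) pqmf_gt0.
  rewrite -[Num.ceil _]/(u 1%N) PoszM; have := pqmf_gt0; nia.
have : 0 <= w u t.
  apply: (chain_ge0_propagate (N := N) nn_gt0 aprime_lt_nn _ (j0 := 1)) => //.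
    by move=> j j_bd; case: (useq_bracket j_bd).
  by rewrite /cycle_seq s_gt0.
by case/andP: t_bd; rewrite /cycle_seq; case: t => // t _ ->.
Qed.

End CycleBounds.

Lemma rg_last_lt_build sts : (rg_last (build sts) < rg_n (build sts))%N.
Proof.
rewrite /build; have : (rg_last rg_init < rg_n rg_init)%N by [].
by elim: sts rg_init => //= st sts IHsts G _; apply: IHsts; case: st.
Qed.

Theorem proposition7p4
  (sts : seq step) (s p q : nat) (k : nat -> int) (mf : int)
  (gs l : Vtx (build sts) s -> rat) (i : nat) (a : int) :
  min_res_steps sts ->
  is_mf (build sts) mf ->
  (0 < s)%N -> (0 < p)%N -> (0 < q)%N -> coprime p q ->
  1 <= k 1%N -> (forall j, (2 <= j <= s)%N -> 2 <= k j) ->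
  cf (kseq k 1 s) = p%:R / q%:R ->
  is_gs (build sts) s k mf gs ->
  is_lprime (build sts) s k mf a gs l ->
  0 <= a -> a < p%:Z ->
  (* (a) *)
  ((forall v, 0 <= zcyc (build sts) s i (useq k s p q mf a i) v) /\
   (forall j, (1 <= j <= s)%N ->
      bform (build sts) s k mf (fun v => zcyc (build sts) s i (useq k s p q mf a i) v + l v) (bchain (build sts) s j) <= 0)) /\
  (* (b) *)
  (forall ub : nat -> int,
     (forall v, 0 <= zcyc (build sts) s i ub v) ->
     (forall j, (1 <= j <= s)%N -> bform (build sts) s k mf (fun v => zcyc (build sts) s i ub v + l v) (bchain (build sts) s j) <= 0) ->
     u1bound p q mf a i <= ub 1%N /\
     (forall j, (1 < j <= s)%N -> ubound k s a j (ub j.-1) <= ub j)).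
Proof.
move=> _ [mv [mv_last mv_div]] s_gt0 p_gt0 q_gt0 co_pq _ k_ge2 cf_pq gs_dual l_min a_ge0 a_lt_p.
have v0_last : val (Ordinal (rg_last_lt_build sts)) = rg_last (build sts) by [].
have [nn1 nn2] := nn1_nn2_of_cf k_ge2 s_gt0 q_gt0 co_pq cf_pq.
have nn_pos t : (1 <= t <= s.+1)%N -> 0 < nn k t s.
  by case: t => [|[|t]] // t_bd; [rewrite nn1 ltz_nat | apply: nn_gt0].
have nn_gt0_2 := nn_gt0 k_ge2.
have a_lt_nn : a < nn k 1 s by rewrite nn1.
have tail1 := aprime1 nn_gt0_2 a_ge0 a_lt_nn.
have tail_lt := aprime_lt_nn nn_gt0_2 a_ge0 a_lt_nn.
have mf_ge0 := mf_ge0 v0_last l_min mv_last mv_div.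
have bform_z := bform_zcyc_chain v0_last l_min mv_last mv_div gs_dual (N := fun t => nn k t s)
  (nn_succ k s) (nn_succ2 k s) nn_pos (nn_rec k_ge2) (aa_ge0 nn_gt0_2 a_ge0 a_lt_nn) tail1 tail_lt.
split; [split|].
- case=> [y|t]; first by rewrite /zcyc; case: ifP.
  rewrite /zcyc ler0z (useq_ge0 i s_gt0 mf_ge0 a_lt_p nn1 nn2 nn_pos tail1 tail_lt) //.
  by rewrite ltn_ord.
- move=> j j_bd; rewrite bform_z // lerz0 subr_le0.
  exact: (useq_chain_form_le i s_gt0 mf_ge0 a_lt_p nn1 nn2 nn_pos (nn_rec k_ge2) tail1).
- move=> ub _ ub_chain.
  apply: (ubound_le_of_chain_form s_gt0 mf_ge0 a_lt_p nn1 nn2 nn_pos (nn_rec k_ge2) tail1).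
  by move=> t t_bd; have := ub_chain t t_bd; rewrite bform_z // lerz0 subr_le0.
Qed.
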